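(* Let $\{\omega_n\}_{n\ge0}$ be a sequence in $\mathbb{T}$ with the repetition property. Then for every $\alpha\in\mathbb{T}$, the sequences $\{\omega_n\}_{n\ge0}$ and $\{\alpha n\}_{n\ge0}$ have the joint repetition property. Consequently, for every $\alpha,\beta\in\mathbb{T}$, the sequences $\{\omega_n\}_{n\ge0}$ and $\{\omega_n+\alpha n+\beta\}_{n\ge0}$ have the joint repetition property.
   Context: $\mathbb{T}=\mathbb{R}/\mathbb{Z}$ with metric $\mathrm{dist}(x,y)=\langle x-y\rangle$, where $\langle\tau\rangle=\min\{|\hat\tau-p|:p\in\mathbb{Z}\}$ for any representative $\hat\tau\in\mathbb{R}$ of $\tau$. $\mathbb{Z}_+=\{1,2,\ldots\}$. A sequence $\{\omega_n\}_{n\ge0}$ in a metric space $\Omega$ has the repetition property if for every $\varepsilon>0$ and $r \in \mathbb{Z}_+$ there exists $q \in \mathbb{Z}_+$ such that $\mathrm{dist}(\omega_n,\omega_{n+q}) < \varepsilon$ for $n = 0,1,\ldots, rq$. A family of sequences $\{\omega^{(\gamma)}_n\}_{n\ge0}$ in metric spaces $\Omega^{(\gamma)}$, $\gamma\in\Gamma$, has the joint repetition property if each of them has the repetition property and, for each finite subfamily and each $\varepsilon>0$, $r\in\mathbb{Z}_+$, a single $q\in\mathbb{Z}_+$ can be chosen that works simultaneously for all sequences in the subfamily. *)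

From Stdlib Require Import Reals List.
Open Scope R_scope.

(* The circle T = R/Z: an element of T is represented by any real
   representative; all notions below depend only on the classes mod Z. *)

(* <tau> = min{ |tau - p| : p in Z }, computed via the floor (Int_part). *)
Definition tnorm (tau : R) : R :=
  let f := tau - IZR (Int_part tau) in Rmin f (1 - f).

Definition tdist (x y : R) : R := tnorm (x - y).

Definition repetition {X : Type} (d : X -> X -> R) (w : nat -> X) : Prop :=
  forall (eps : R) (r : nat), 0 < eps -> (1 <= r)%nat ->
    exists q : nat, (1 <= q)%nat /\
      forall n : nat, (n <= r * q)%nat -> d (w n) (w (n + q)%nat) < eps.

Definition joint_repetition {X I : Type} (d : X -> X -> R) (w : I -> nat -> X) : Prop :=
  (forall i, repetition d (w i)) /\
  forall (F : list I) (eps : R) (r : nat), 0 < eps -> (1 <= r)%nat ->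
    exists q : nat, (1 <= q)%nat /\
      forall i, In i F ->
        forall n : nat, (n <= r * q)%nat -> d (w i n) (w i (n + q)%nat) < eps.

Definition pair_seq {X : Type} (u v : nat -> X) : bool -> nat -> X :=
  fun b => if b then u else v.

From Stdlib Require Import Reals List Lra Lia ZArith Classical.
Open Scope R_scope.

(* The heart of the theorem is that a return time of a sequence with the
   repetition property can be upgraded to a return time of the rotation
   n |-> alpha n as well.  Given eps and r, pick M > 1/eps and apply the
   repetition property of w with tolerance eps/(M+1) and horizon (r+1)M,
   obtaining a return time q.  By Dirichlet's pigeonhole argument among the
   points alpha k q (0 <= k <= M) there are i < j <= M with <alpha (j-i) q>
   < 1/M < eps.  Then Q = (j-i) q works for both sequences: for the rotation
   because <alpha n - alpha (n+Q)> = <alpha Q>, and for w by telescoping j-i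
   steps of length q, each costing less than eps/(M+1). *)

Lemma tnorm_le (x : R) (p : Z) : tnorm x <= Rabs (x - IZR p).
Proof.
  unfold tnorm. destruct (base_Int_part x) as [Hlo Hhi].
  remember (Int_part x) as k eqn:Ek.
  replace (x - IZR p) with ((x - IZR k) + IZR (k - p)) by (rewrite minus_IZR; ring).
  assert (Hz : (k - p = 0 \/ 1 <= k - p \/ k - p <= -1)%Z) by lia.
  destruct Hz as [Hz|[Hz|Hz]].
  - rewrite Hz, Rplus_0_r, Rabs_right by lra. apply Rmin_l.
  - apply IZR_le in Hz. rewrite Rabs_right by lra.
    eapply Rle_trans; [apply Rmin_l | lra].
  - apply IZR_le in Hz. rewrite Rabs_left by lra.
    eapply Rle_trans; [apply Rmin_r | lra].
Qed.

Lemma tnorm_attained (x : R) : exists p, tnorm x = Rabs (x - IZR p).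
Proof.
  unfold tnorm. destruct (base_Int_part x) as [Hlo Hhi].
  remember (Int_part x) as k eqn:Ek.
  destruct (Rle_dec (x - IZR k) (1 - (x - IZR k))).
  - exists k. rewrite Rmin_left, Rabs_right by lra. reflexivity.
  - exists (k + 1)%Z. rewrite Rmin_right, plus_IZR, Rabs_left by lra. ring.
Qed.

Lemma tdist_refl (x : R) : tdist x x = 0.
Proof.
  unfold tdist. rewrite Rminus_diag.
  destruct (tnorm_attained 0) as [p Hp].
  apply Rle_antisym; [| rewrite Hp; apply Rabs_pos].
  eapply Rle_trans; [apply (tnorm_le 0 0) |]. rewrite Rminus_0_r, Rabs_R0. lra.
Qed.

Lemma tnorm_add (a b : R) : tnorm (a + b) <= tnorm a + tnorm b.
Proof.
  destruct (tnorm_attained a) as [p ->]. destruct (tnorm_attained b) as [p' ->].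
  eapply Rle_trans; [apply (tnorm_le _ (p + p')) |].
  rewrite plus_IZR.
  replace (a + b - (IZR p + IZR p')) with ((a - IZR p) + (b - IZR p')) by ring.
  apply Rabs_triang.
Qed.

Lemma tdist_triangle (x y z : R) : tdist x z <= tdist x y + tdist y z.
Proof.
  unfold tdist. replace (x - z) with ((x - y) + (y - z)) by ring. apply tnorm_add.
Qed.

(* Pigeonhole principle: M+1 values in {0,...,M-1} contain a repetition.
   If f were injective on {0,...,M}, the list of its values would be a
   duplicate-free list of length M+1 inside {0,...,M-1}. *)
Lemma pigeonhole (M : nat) (f : nat -> nat) :
  (forall k, (k <= M)%nat -> (f k < M)%nat) ->
  exists i j, (i < j <= M)%nat /\ f i = f j.
Proof.
  intros Hf. apply NNPP. intros Hnone.
  assert (Hinj : NoDup (map f (seq 0 (S M)))).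
  { apply (NoDup_nth _ (f 0%nat)). rewrite length_map, length_seq.
    intros i j Hi Hj. rewrite !map_nth, !seq_nth by lia. simpl. intros Hij.
    destruct (lt_eq_lt_dec i j) as [[Hlt|Heq]|Hgt]; [| exact Heq |].
    - exfalso. apply Hnone. exists i, j. split; [lia | exact Hij].
    - exfalso. apply Hnone. exists j, i. split; [lia | auto]. }
  assert (Hincl : incl (map f (seq 0 (S M))) (seq 0 M)).
  { intros y Hy. apply in_map_iff in Hy as [k [<- Hk]].
    apply in_seq in Hk. apply in_seq. specialize (Hf k). lia. }
  pose proof (NoDup_incl_length Hinj Hincl) as Hlen.
  rewrite length_map, !length_seq in Hlen. lia.
Qed.

Lemma bucket_range (M : nat) (y : R) : (1 <= M)%nat -> 0 <= y < 1 ->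
  (0 <= Int_part (INR M * y) < Z.of_nat M)%Z.
Proof.
  intros HM Hy. destruct (base_Int_part (INR M * y)) as [Hlo Hhi].
  assert (HM' : 1 <= INR M) by (apply (le_INR 1); auto).
  assert (0 <= INR M * y) by nra. assert (INR M * y < INR M) by nra.
  split.
  - apply Z.lt_succ_r, lt_IZR. rewrite succ_IZR. simpl. lra.
  - apply lt_IZR. rewrite <- INR_IZR_INZ. lra.
Qed.

(* Dirichlet's approximation principle: among M+1 points of R/Z two are at
   distance less than 1/M (their fractional parts share a bucket of width 1/M). *)
Lemma dirichlet (M : nat) (x : nat -> R) : (1 <= M)%nat ->
  exists i j, (i < j <= M)%nat /\ tdist (x i) (x j) < / INR M.
Proof.
  intros HM.
  pose (frac := fun k => x k - IZR (Int_part (x k))).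
  assert (Hfrac : forall k, 0 <= frac k < 1).
  { intro k. unfold frac. destruct (base_Int_part (x k)). lra. }
  pose (bucket := fun k => Z.to_nat (Int_part (INR M * frac k))).
  destruct (pigeonhole M bucket) as [i [j [Hij Hb]]].
  { intros k _. unfold bucket. destruct (bucket_range M (frac k) HM (Hfrac k)). lia. }
  exists i, j. split; [exact Hij |].
  unfold bucket in Hb.
  destruct (bucket_range M (frac i) HM (Hfrac i)).
  destruct (bucket_range M (frac j) HM (Hfrac j)).
  apply Znat.Z2Nat.inj in Hb; try lia.
  destruct (base_Int_part (INR M * frac i)).
  destruct (base_Int_part (INR M * frac j)).
  rewrite Hb in *.
  assert (HM' : 1 <= INR M) by (apply (le_INR 1); auto).
  assert (Hclose : Rabs (frac i - frac j) < / INR M).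
  { apply Rabs_def1; apply (Rmult_lt_reg_l (INR M)); try lra.
    - rewrite Rinv_r by lra. lra.
    - replace (INR M * - / INR M) with (-1) by (field; lra). lra. }
  unfold tdist. eapply Rle_lt_trans; [apply (tnorm_le _ (Int_part (x i) - Int_part (x j))) |].
  rewrite minus_IZR.
  replace (x i - x j - (IZR (Int_part (x i)) - IZR (Int_part (x j))))
    with (frac i - frac j) by (unfold frac; ring).
  exact Hclose.
Qed.

Lemma telescope_steps (w : nat -> R) (e : R) (N q : nat) :
  (forall m, (m <= N)%nat -> tdist (w m) (w (m + q)%nat) < e) ->
  forall k n, (n + k * q <= N + q)%nat -> tdist (w n) (w (n + k * q)%nat) <= INR k * e.
Proof.
  intros Hstep k. induction k as [|k IH]; intros n Hn.
  - rewrite Nat.mul_0_l, Nat.add_0_r, tdist_refl. simpl. lra.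
  - eapply Rle_trans; [apply (tdist_triangle _ (w (n + k * q)%nat)) |].
    replace (n + S k * q)%nat with (n + k * q + q)%nat by lia.
    pose proof (Hstep (n + k * q)%nat ltac:(nia)).
    pose proof (IH n ltac:(nia)).
    rewrite S_INR. lra.
Qed.

Lemma tdist_rotation (alpha : R) (n m q : nat) :
  tdist (alpha * INR n) (alpha * INR (n + q)) = tdist (alpha * INR m) (alpha * INR (m + q)).
Proof. unfold tdist. rewrite !plus_INR. f_equal. ring. Qed.

Definition shared_returns {X : Type} (d : X -> X -> R) (u v : nat -> X) : Prop :=
  forall (eps : R) (r : nat), 0 < eps -> (1 <= r)%nat ->
    exists q : nat, (1 <= q)%nat /\
      forall n : nat, (n <= r * q)%nat ->
        d (u n) (u (n + q)%nat) < eps /\ d (v n) (v (n + q)%nat) < eps.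

Lemma joint_repetition_of_shared {X : Type} (d : X -> X -> R) (u v : nat -> X) :
  shared_returns d u v -> joint_repetition d (pair_seq u v).
Proof.
  intros Hshared. split.
  - intros b eps r He Hr. destruct (Hshared eps r He Hr) as [q [Hq Hret]].
    exists q. split; [exact Hq |]. intros n Hn. destruct b; apply Hret; exact Hn.
  - intros F eps r He Hr. destruct (Hshared eps r He Hr) as [q [Hq Hret]].
    exists q. split; [exact Hq |]. intros b _ n Hn. destruct b; apply Hret; exact Hn.
Qed.

Lemma shared_returns_rotation (w : nat -> R) (alpha : R) :
  repetition tdist w -> shared_returns tdist w (fun n => alpha * INR n).
Proof.
  intros Hw eps r He Hr.
  destruct (archimed_cor1 eps He) as [M [HinvM HM]].
  assert (HMpos : 0 < INR M) by (apply lt_0_INR; lia).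
  pose (e := eps / (INR M + 1)).
  assert (He' : 0 < e) by (unfold e; apply Rdiv_lt_0_compat; lra).
  destruct (Hw e ((r + 1) * M)%nat He' ltac:(nia)) as [q [Hq Hret]].
  destruct (dirichlet M (fun k => alpha * INR (k * q)) ltac:(lia)) as [i [j [Hij Hdir]]].
  exists ((j - i) * q)%nat. split; [nia |]. intros n Hn. split.
  - (* j - i <= M steps of length q, each costing less than eps / (M + 1) *)
    eapply Rle_lt_trans; [apply (telescope_steps w e _ q Hret (j - i) n); nia |].
    assert (INR (j - i) <= INR M) by (apply le_INR; lia).
    assert (Hbudget : (INR M + 1) * e = eps) by (unfold e; field; lra).
    nra.
  - (* the rotation moves by <alpha (j - i) q> = dist(alpha i q, alpha j q) *)
    rewrite (tdist_rotation alpha n (i * q)).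
    replace (i * q + (j - i) * q)%nat with (j * q)%nat by nia.
    lra.
Qed.

Lemma shared_returns_add (u v : nat -> R) (beta : R) :
  shared_returns tdist u v -> shared_returns tdist u (fun n => u n + v n + beta).
Proof.
  intros Hshared eps r He Hr.
  destruct (Hshared (eps / 2) r ltac:(lra) Hr) as [q [Hq Hret]].
  exists q. split; [exact Hq |]. intros n Hn.
  destruct (Hret n Hn) as [Hu Hv]. split; [lra |].
  unfold tdist in *.
  replace (u n + v n + beta - (u (n + q)%nat + v (n + q)%nat + beta))
    with ((u n - u (n + q)%nat) + (v n - v (n + q)%nat)) by ring.
  eapply Rle_lt_trans; [apply tnorm_add | lra].
Qed.

Theorem lemma3p2 (w : nat -> R) :
  repetition tdist w ->
  (forall alpha : R,
     joint_repetition tdist (pair_seq w (fun n => alpha * INR n))) /\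
  (forall alpha beta : R,
     joint_repetition tdist (pair_seq w (fun n => w n + alpha * INR n + beta))).
Proof.
  intros Hw. split.
  - intros alpha. apply joint_repetition_of_shared, shared_returns_rotation, Hw.
  - intros alpha beta. apply joint_repetition_of_shared.
    apply (shared_returns_add w (fun n => alpha * INR n)).
    apply shared_returns_rotation, Hw.
Qed.
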